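(* Let $F$ be a face of a polyhedron $Q\subset V$ and $v\in V$. Let $y\in\mathrm{relint}(\sigma_F)$ and let $H=\{x\in V:\langle y,x\rangle=\langle y,v\rangle\}$, $H^-=\{x\in V:\langle y,x\rangle\le\langle y,v\rangle\}$. Then for every $P\in\mathrm{Def}^+(Q)$, the affine cone $C_F+v$ tightly contains $P$ if and only if $P\subseteq H^-$ and $\emptyset\subsetneq P\cap H\subseteq\mathrm{lineal}(C_F)+v$.
   Context: $V$ is a finite-dimensional real vector space with inner product $\langle\cdot,\cdot\rangle$. For a polyhedron $Q$, $\Sigma_Q$ is its outer normal fan; for a face $F$, $\sigma_F\in\Sigma_Q$ is the cone of linear functionals attaining their maximum on $Q$ exactly on $F$; the tangent cone of $Q$ at $F$ is $C_F=\sigma_F^\vee=\mathrm{Cone}(v'-v\mid v\in F,v'\in Q)$. A polyhedron $P$ is an extended deformation of $Q$ if each cone of $\Sigma_P$ is a union of cones of $\Sigma_Q$; $\mathrm{Def}^+(Q)$ is the set of extended deformations of $Q$. $\mathrm{lineal}(C)$ is the lineality space of a cone $C$. A translate $C+v$ tightly contains a polyhedron $P$ if $P\subseteq C+v$ and $P\cap(\mathrm{lineal}(C)+v)\ne\emptyset$. *)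

(* V is modelled as 'rV[R]_n with the standard dot product. *)
From HB Require Import structures.
From mathcomp Require Import all_boot all_order all_algebra.
From mathcomp Require Import reals.
Set Implicit Arguments. Unset Strict Implicit. Unset Printing Implicit Defensive.
Import Order.TTheory GRing.Theory Num.Theory.
Local Open Scope ring_scope.

Definition vset (R : realType) (n : nat) := 'rV[R]_n -> Prop.

Definition dot (R : realType) (n : nat) (u v : 'rV[R]_n) : R :=
  \sum_(i < n) u 0 i * v 0 i.

Definition is_polyhedron (R : realType) (n : nat) (P : vset R n) : Prop :=
  exists (m : nat) (A : 'I_m -> 'rV[R]_n) (b : 'I_m -> R),
    forall x, P x <-> (forall i, dot (A i) x <= b i).

Definition is_face (R : realType) (n : nat) (Q F : vset R n) : Prop :=
  (exists x, F x) /\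
  exists c : 'rV[R]_n, forall x,
    F x <-> (Q x /\ forall q, Q q -> dot c q <= dot c x).

Definition normal_cone (R : realType) (n : nat) (Q F : vset R n) : vset R n :=
  fun y => forall x q, F x -> Q q -> dot y q <= dot y x.

Definition normal_fan (R : realType) (n : nat) (Q : vset R n) : vset R n -> Prop :=
  fun sigma => exists F, is_face Q F /\ forall y, sigma y <-> normal_cone Q F y.

Definition union_of (R : realType) (n : nat) (sigma : vset R n)
    (Sig : vset R n -> Prop) : Prop :=
  exists S : vset R n -> Prop, (forall tau, S tau -> Sig tau) /\
    forall y, sigma y <-> exists tau, S tau /\ tau y.

Definition Def_plus (R : realType) (n : nat) (Q P : vset R n) : Prop :=
  is_polyhedron P /\
  forall sigma, normal_fan P sigma -> union_of sigma (normal_fan Q).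

(* tangent cone C_F = sigma_F^vee (polar w.r.t. the sign convention of
   Cone(v' - v | v in F, v' in Q)) *)
Definition tangent_cone (R : realType) (n : nat) (Q F : vset R n) : vset R n :=
  fun x => forall y, normal_cone Q F y -> dot y x <= 0.

Definition lineal (R : realType) (n : nat) (C : vset R n) : vset R n :=
  fun x => C x /\ C (- x).

Definition tightly_contains (R : realType) (n : nat) (C : vset R n)
    (v : 'rV[R]_n) (P : vset R n) : Prop :=
  (forall x, P x -> C (x - v)) /\ (exists x, P x /\ lineal C (x - v)).

Definition aff_hull (R : realType) (n : nat) (S : vset R n) : vset R n :=
  fun z => exists (k : nat) (p : 'I_k -> 'rV[R]_n) (l : 'I_k -> R),
    \sum_(i < k) l i = 1 /\ (forall i, S (p i)) /\ z = \sum_(i < k) l i *: p i.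

Definition relint (R : realType) (n : nat) (S : vset R n) : vset R n :=
  fun x => S x /\ exists eps : R, 0 < eps /\
    forall z, aff_hull S z -> dot (z - x) (z - x) < eps -> S z.

(* Write sigma_F for the normal cone of Q at F and C_F = polar(sigma_F) for
   the tangent cone. The only property of y used is that it lies in the
   relative interior of sigma_F: for every z in sigma_F, the point
   (1 + t) y - t z is still in sigma_F for some t > 0 ([relint_push]).
   From this, a vector x of C_F with <y, x> = 0 lies in lineal(C_F)
   ([polar_relint_lineal]), which gives necessity ([tight_halfspace]) for
   any cone with a relative-interior functional.  For sufficiency, the set G
   of maximizers of y on P is a face of P with y in its normal cone; since P
   is an extended deformation of Q, that normal cone is a union of normal
   cones of Q, one of which contains y and hence all of sigma_F
   ([normal_cone_sub_of_relint], [deformation_normal_cone_sub]).  Then every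
   functional of sigma_F is maximized on P at a point g of G with g - v in
   lineal(C_F), so P lies in C_F + v tightly ([tight_of_normal_cone_sub]). *)

From HB Require Import structures.
From mathcomp Require Import all_boot all_order all_algebra.
From mathcomp Require Import reals.
From mathcomp Require Import lra.
Set Implicit Arguments. Unset Strict Implicit. Unset Printing Implicit Defensive.
Import Order.TTheory GRing.Theory Num.Theory.
Local Open Scope ring_scope.

Section Dot.
Variables (R : realType) (n : nat).
Implicit Types (u w x : 'rV[R]_n).

Lemma dotC u w : dot u w = dot w u.
Proof. by apply: eq_bigr => i _; rewrite mulrC. Qed.

Lemma dotDl u w x : dot (u + w) x = dot u x + dot w x.
Proof. by rewrite /dot -big_split; apply: eq_bigr => i _; rewrite mxE mulrDl. Qed.

Lemma dotZl a u x : dot (a *: u) x = a * dot u x.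
Proof. by rewrite /dot mulr_sumr; apply: eq_bigr => i _; rewrite mxE mulrA. Qed.

Lemma dotNl u x : dot (- u) x = - dot u x.
Proof. by rewrite -scaleN1r dotZl mulN1r. Qed.

Lemma dotBl u w x : dot (u - w) x = dot u x - dot w x.
Proof. by rewrite dotDl dotNl. Qed.

Lemma dotZr a u x : dot x (a *: u) = a * dot x u.
Proof. by rewrite dotC dotZl dotC. Qed.

Lemma dotNr u x : dot x (- u) = - dot x u.
Proof. by rewrite dotC dotNl dotC. Qed.

Lemma dotBr u w x : dot x (u - w) = dot x u - dot x w.
Proof. by rewrite dotC dotBl !(dotC x). Qed.

Lemma dot_ge0 u : 0 <= dot u u.
Proof. by apply: sumr_ge0 => i _; rewrite -expr2 sqr_ge0. Qed.

End Dot.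

Section RelativeInterior.
Variables (R : realType) (n : nat).
Implicit Types (S : vset R n) (y z : 'rV[R]_n).

Lemma aff_hull2 S a b y z : a + b = 1 -> S y -> S z ->
  aff_hull S (a *: y + b *: z).
Proof.
move=> ab1 Sy Sz.
exists 2%N, (fun i : 'I_2 => if val i == 0%N then y else z),
  (fun i : 'I_2 => if val i == 0%N then a else b).
split; [|split].
- by rewrite !big_ord_recl big_ord0 /= addr0.
- by move=> i; case: ifP.
- by rewrite !big_ord_recl big_ord0 /= addr0.
Qed.

Lemma small_square_factor (d eps : R) : 0 <= d -> 0 < eps ->
  exists t : R, 0 < t /\ t * t * d < eps.
Proof.
move=> d0 eps0; have den0 : 0 < 1 + d + eps by lra.
exists (eps / (1 + d + eps)); set t := eps / _.
have t0 : 0 < t by rewrite divr_gt0.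
have ht : t * (1 + d + eps) = eps by rewrite /t divfK ?gt_eqF.
have t1 : t <= 1 by rewrite -(ler_pM2r den0) mul1r ht; lra.
have ttd : t * (t * d) <= t * d by rewrite ler_piMl // mulr_ge0 // ltW.
split=> //; rewrite -mulrA; nra.
Qed.

Lemma relint_push S y z : relint S y -> S z ->
  exists t : R, 0 < t /\ S ((1 + t) *: y - t *: z).
Proof.
case=> Sy [eps [eps0 Sball]] Sz.
have [t [t0 small]] := small_square_factor (dot_ge0 (y - z)) eps0.
exists t; split=> //; apply: Sball.
  by rewrite -scaleNr; apply: aff_hull2 => //; rewrite addrK.
have -> : (1 + t) *: y - t *: z - y = t *: (y - z).
  by rewrite scalerDl scale1r scalerBr addrAC [y + _]addrC addrK.
by rewrite dotZl dotZr mulrA.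
Qed.

End RelativeInterior.

Section Polar.
Variables (R : realType) (n : nat).
Implicit Types (N : vset R n) (x y z : 'rV[R]_n).

Definition polar N : vset R n := fun x => forall z, N z -> dot z x <= 0.

Lemma tangent_coneE (Q F : vset R n) : tangent_cone Q F = polar (normal_cone Q F).
Proof. by []. Qed.

Lemma lineal_polar_orth N x z : lineal (polar N) x -> N z -> dot z x = 0.
Proof.
by move=> [Cx CNx] Nz; have := Cx z Nz; have := CNx z Nz; rewrite dotNr; lra.
Qed.

Lemma polar_relint_lineal N x y : relint N y -> polar N x -> dot y x = 0 ->
  lineal (polar N) x.
Proof.
move=> Ny Cx yx0; split=> // z Nz.
have [t [t0 Nw]] := relint_push Ny Nz.
have := Cx _ Nw; rewrite dotBl !dotZl yx0 mulr0 sub0r oppr_le0 => tzx.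
by rewrite dotNr oppr_le0 -(pmulr_rge0 _ t0).
Qed.

End Polar.

Section NormalCones.
Variables (R : realType) (n : nat).
Implicit Types (P Q F G : vset R n) (x y z : 'rV[R]_n).

Lemma face_sub Q F x : is_face Q F -> F x -> Q x.
Proof. by move=> [_ [c Fc]] /Fc []. Qed.

Lemma normal_cone_sub_of_relint Q F F' f y :
  (forall x, F' x -> Q x) -> F f -> Q f ->
  relint (normal_cone Q F) y -> normal_cone Q F' y ->
  forall z, normal_cone Q F z -> normal_cone Q F' z.
Proof.
move=> F'Q Ff Qf yF yF' z zF x' q F'x' Qq.
have Qx' := F'Q x' F'x'.
have yx'f : dot y x' = dot y f.
  by apply/eqP; rewrite eq_le yF.1 // yF'.
have [t [t0 wF]] := relint_push yF zF.
have := wF f x' Ff Qx'; rewrite !dotBl !dotZl yx'f => tz.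
have zqf := zF f q Ff Qq.
suff : dot z f <= dot z x' by lra.
by rewrite -(ler_pM2l t0); lra.
Qed.

Definition argmax_set P y (a : R) : vset R n := fun x => P x /\ dot y x = a.

Lemma argmax_face P y a g : (forall x, P x -> dot y x <= a) ->
  P g -> dot y g = a -> is_face P (argmax_set P y a).
Proof.
move=> Pa Pg yg; split; first by exists g.
exists y => x; split.
- by move=> [Px ->]; split=> // q Pq; exact: Pa.
- move=> [Px xmax]; split=> //.
  by have := Pa x Px; have := xmax g Pg; lra.
Qed.

Lemma argmax_normal P y a : (forall x, P x -> dot y x <= a) ->
  normal_cone P (argmax_set P y a) y.
Proof. by move=> Pa x q [_ ->] Pq; exact: Pa. Qed.

Lemma deformation_normal_cone_sub Q P F G y :
  Def_plus Q P -> is_face P G -> normal_cone P G y ->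
  is_face Q F -> relint (normal_cone Q F) y ->
  forall z, normal_cone Q F z -> normal_cone P G z.
Proof.
move=> [_ fanP] faceG yG faceF yF z zF.
have [[f Ff] _] := faceF.
have fanG : normal_fan P (normal_cone P G).
  by exists G; split=> // w.
have [S [SQ Seq]] := fanP _ fanG.
have [tau [Stau tauy]] := (Seq y).1 yG.
have [F' [faceF' tauE]] := SQ _ Stau.
apply/(Seq z).2; exists tau; split=> //; apply/(tauE z).2.
have yF' : normal_cone Q F' y by exact/(tauE y).1.
exact: (normal_cone_sub_of_relint (fun x => face_sub faceF') Ff
  (face_sub faceF Ff) yF yF').
Qed.

End NormalCones.

Section Tightness.
Variables (R : realType) (n : nat).
Implicit Types (N P G : vset R n) (v x y z g : 'rV[R]_n).

Lemma tight_halfspace N v y P : relint N y ->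
  tightly_contains (polar N) v P ->
  (forall x, P x -> dot y x <= dot y v) /\
  (exists x, P x /\ dot y x = dot y v) /\
  (forall x, P x -> dot y x = dot y v -> lineal (polar N) (x - v)).
Proof.
move=> yN [PC [g [Pg gL]]]; split; [|split].
- by move=> x Px; have := PC x Px y yN.1; rewrite dotBr subr_le0.
- exists g; split=> //; apply/eqP.
  by rewrite -subr_eq0 -dotBr (lineal_polar_orth gL yN.1).
- move=> x Px yx; apply: polar_relint_lineal yN (PC x Px) _.
  by rewrite dotBr yx subrr.
Qed.

Lemma tight_of_normal_cone_sub N v P G g :
  (forall z, N z -> normal_cone P G z) -> P g -> G g ->
  lineal (polar N) (g - v) -> tightly_contains (polar N) v P.
Proof.
move=> NG Pg Gg gL; split; last by exists g.
move=> x Px z Nz; have zxg := NG z Nz g x Gg Px.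
have := lineal_polar_orth gL Nz; rewrite !dotBr; lra.
Qed.

End Tightness.
Unset Implicit Arguments.

Theorem lemma2p4 (R : realType) (n : nat) (Q F : vset R n) (v y : 'rV[R]_n) :
  is_polyhedron Q -> is_face Q F -> relint (normal_cone Q F) y ->
  forall P : vset R n, Def_plus Q P ->
    (tightly_contains (tangent_cone Q F) v P <->
     ((forall x, P x -> dot y x <= dot y v) /\
      (exists x, P x /\ dot y x = dot y v) /\
      (forall x, P x -> dot y x = dot y v -> lineal (tangent_cone Q F) (x - v)))).
Proof.
move=> _ faceF yF P defP; rewrite tangent_coneE; split.
  exact: tight_halfspace.
move=> [below [[g [Pg yg]] touch]].
pose G := argmax_set P y (dot y v).
have faceG : is_face P G := argmax_face below Pg yg.
have sigmaF_G := deformation_normal_cone_sub defP faceG (argmax_normal below) faceF yF.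
exact: tight_of_normal_cone_sub sigmaF_G Pg (conj Pg yg) (touch g Pg yg).
Qed.
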